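(* Let $G$ be a graph on $n\ge 3$ vertices with no isolated vertices, and let $r$ be a positive integer. If $\mathscr{Z}^{\rm TAR}(G)\cong K_{1,r}\,\square\,K_2$, then $G\cong K_{1,r}$.
   Context: Zero forcing: starting with a set $S$ of blue vertices, a blue vertex $v$ may turn blue a white vertex $w$ if $w$ is the only white neighbor of $v$; $S$ is a zero forcing set if repeated application colors all vertices blue. $\mathscr{Z}^{\rm TAR}(G)$ has vertices the zero forcing sets of $G$, two adjacent iff their symmetric difference has size 1. $K_{1,r}$ is the star with $r$ leaves and $\square$ is the Cartesian product of graphs. *)

From mathcomp Require Import all_boot.
Set Implicit Arguments. Unset Strict Implicit. Unset Printing Implicit Defensive.

Definition simple_graph (T : finType) (e : rel T) : Prop :=
  symmetric e /\ irreflexive e.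

Inductive forces_all (T : finType) (e : rel T) : {set T} -> Prop :=
| fa_done (B : {set T}) : B = [set: T] -> forces_all e B
| fa_step (B : {set T}) (v w : T) :
    v \in B -> w \notin B -> e v w ->
    (forall u, e v u -> u != w -> u \in B) ->
    forces_all e (w |: B) -> forces_all e B.

Definition zero_forcing_set (T : finType) (e : rel T) (S : {set T}) : Prop :=
  forces_all e S.

Definition tar_adj (T : finType) (S S' : {set T}) : bool :=
  #|(S :\: S') :|: (S' :\: S)| == 1.

(* The star K_{1,r}: centre None, leaves Some i. *)
Definition star_adj (r : nat) (x y : option 'I_r) : bool :=
  match x, y with
  | None, Some _ | Some _, None => true
  | _, _ => false
  end.

Definition starK2_adj (r : nat) (x y : option 'I_r * bool) : bool :=
  ((x.1 == y.1) && (x.2 != y.2)) || ((x.2 == y.2) && star_adj x.1 y.1).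

Definition iso_onto (U V : Type) (A : U -> Prop) (eU : U -> U -> bool)
  (eV : V -> V -> bool) : Prop :=
  exists f : V -> U,
    [/\ injective f, (forall x, A (f x)), (forall S, A S -> exists x, f x = S)
      & forall x y, eU (f x) (f y) = eV x y].

Definition graph_iso (T V : finType) (eT : rel T) (eV : rel V) : Prop :=
  exists f : T -> V, bijective f /\ forall x y, eV (f x) (f y) = eT x y.

From mathcomp Require Import all_boot perm.
Set Implicit Arguments. Unset Strict Implicit. Unset Printing Implicit Defensive.

(* Since G has no isolated vertex, V and every V - v are zero forcing, and the
   sets V - v are exactly the TAR-neighbours of V.  So V corresponds to a
   vertex of K_{1,r} x K_2 of degree n >= 3, i.e. to a copy (None, b) of the
   star centre, and n = r + 1.  Its neighbour (None, ~~ b) is some V - v0 and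
   the leaves (Some i, b) are the other sets V - u.  Completing the squares
   through (Some i, ~~ b) shows that every V - {u, v0} is zero forcing, while
   no V - {u, w} with u, w <> v0 is: it would be a second common neighbour of
   two leaves.  A vertex adjacent to u but not to w would force u in
   V - {u, w}, so the vertices other than v0 are pairwise twins, and G is the
   star centred at v0. *)

Lemma tar_adj_flip (T : finType) (A S : {set T}) :
  tar_adj A S -> exists x, forall y, (y \in S) = (y \in A) (+) (y == x).
Proof.
rewrite /tar_adj => /cards1P [x /setP Hx]; exists x => y.
by move: (Hx y); rewrite !inE; case: (y \in A); case: (y \in S); case: (y == x).
Qed.

Lemma tar_adj_setD1 (T : finType) (A : {set T}) (x : T) :
  x \in A -> tar_adj A (A :\ x).
Proof.
move=> xA; rewrite /tar_adj (_ : _ :|: _ = [set x]) ?cards1 //.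
apply/setP => y; rewrite !inE.
by case: eqP => [->|]; rewrite ?xA //; case: (y \in A).
Qed.

Lemma tar_adj_setT (T : finType) (S : {set T}) :
  tar_adj [set: T] S -> exists v, S = [set: T] :\ v.
Proof.
move/tar_adj_flip => [v Hv]; exists v.
by apply/setP => y; rewrite Hv !inE andbT.
Qed.

Lemma setTD1_inj (T : finType) : injective (fun v : T => [set: T] :\ v).
Proof. by move=> u v /setP /(_ u); rewrite !inE eqxx /=; case: eqP. Qed.

Lemma tar_adj_setD1_common (T : finType) (u v : T) (S : {set T}) :
  u != v -> tar_adj ([set: T] :\ u) S -> tar_adj ([set: T] :\ v) S ->
  S != [set: T] -> S = [set: T] :\ u :\ v.
Proof.
move=> uv /tar_adj_flip [x Hx] /tar_adj_flip [x' Hx'] SnT.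
have xu : x != u.
  apply: contraNneq SnT => xu; apply/eqP/setP => y.
  by rewrite Hx xu !inE; case: (y == u).
have Su : u \notin S by rewrite Hx !inE eqxx eq_sym.
have x'u : x' = u by apply/eqP; move: Su; rewrite Hx' !inE uv /= negbK eq_sym.
have Sv : v \notin S by rewrite Hx' !inE eqxx x'u eq_sym.
have xv : x = v.
  by apply/eqP; move: Sv; rewrite Hx !inE eq_sym uv /= negbK eq_sym.
apply/setP => y; rewrite Hx xv !inE andbT.
by case: (eqVneq y v) => [->|]; [rewrite eq_sym uv | rewrite addbF].
Qed.

Section ZeroForcing.

Variables (T : finType) (e : rel T).
Hypotheses (e_sym : symmetric e) (e_irr : irreflexive e).

Lemma zero_forcing_setT : zero_forcing_set e [set: T].
Proof. exact: fa_done. Qed.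

Lemma zero_forcing_first_force (B : {set T}) :
  zero_forcing_set e B -> B != [set: T] ->
  exists v w, [/\ v \in B, w \notin B, e v w
                & forall z, e v z -> z != w -> z \in B].
Proof.
case=> [{}B -> | {}B v w vB wB evw Hv _]; first by rewrite eqxx.
by exists v, w.
Qed.

Lemma zero_forcing_setD1 (v : T) :
  (exists u, e v u) -> zero_forcing_set e ([set: T] :\ v).
Proof.
move=> [u evu]; have uv : u != v by apply: contraTneq evu => ->; rewrite e_irr.
apply: (@fa_step _ _ _ u v); rewrite ?inE ?eqxx ?uv //.
- by rewrite e_sym.
- by move=> z _ zv; rewrite !inE zv.
by apply: fa_done; apply/setP => z; rewrite !inE; case: eqP.
Qed.

Lemma zero_forcing_setD2 (u w v : T) :
  u != w -> v != w -> e v u -> ~~ e v w ->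
  (exists x, e w x) -> zero_forcing_set e ([set: T] :\ u :\ w).
Proof.
move=> uw vw evu evw w_nonisolated.
have vu : v != u by apply: contraTneq evu => ->; rewrite e_irr.
apply: (@fa_step _ _ _ v u); rewrite ?inE ?eqxx ?vu ?vw ?andbF //.
  by move=> z evz zu; rewrite !inE zu !andbT; apply: contraNneq evw => <-.
have -> : u |: ([set: T] :\ u :\ w) = [set: T] :\ w.
  by apply/setP => z; rewrite !inE; case: eqP => [->|]; rewrite ?uw.
exact: zero_forcing_setD1.
Qed.

End ZeroForcing.

Section StarRecognition.

Variables (T : finType) (e : rel T) (v0 : T).
Hypotheses (e_sym : symmetric e) (e_irr : irreflexive e).
Hypothesis e_nonisolated : forall v, exists u, e v u.
Hypothesis zero_forcing_setD2_centre :
  forall u, u != v0 -> zero_forcing_set e ([set: T] :\ u :\ v0).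
Hypothesis not_zero_forcing_setD2_leaves :
  forall u w, u != v0 -> w != v0 -> u != w ->
  ~ zero_forcing_set e ([set: T] :\ u :\ w).

Lemma leaves_twins (u w v : T) :
  u != v0 -> w != v0 -> u != w -> v != u -> v != w -> e v u = e v w.
Proof.
have adj_both a c : a != v0 -> c != v0 -> a != c -> v != c -> e v a -> e v c.
  move=> av0 cv0 ac vc eva; apply: contraT => evc; exfalso.
  apply: (not_zero_forcing_setD2_leaves av0 cv0 ac).
  exact: (zero_forcing_setD2 e_sym e_irr ac vc eva evc (e_nonisolated c)).
by move=> uv0 wv0 uw vu vw; apply/idP/idP; apply: adj_both; rewrite // eq_sym.
Qed.

Lemma centre_adj (u : T) : u != v0 -> e v0 u.
Proof.
move=> uv0; have [x ev0x] := e_nonisolated v0.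
have xv0 : x != v0 by apply: contraTneq ev0x => ->; rewrite e_irr.
case: (eqVneq u x) => [-> // | ux].
by rewrite (leaves_twins uv0 xv0 ux) // eq_sym.
Qed.

Lemma leaves_nonadj (u w : T) : u != v0 -> w != v0 -> ~~ e u w.
Proof.
move=> uv0 wv0; apply/negP => euw.
have uw : u != w by apply: contraTneq euw => ->; rewrite e_irr.
have BnT : [set: T] :\ u :\ v0 != [set: T].
  by apply/eqP => /setP /(_ u); rewrite !inE eqxx andbF.
(* The first force in V - {u, v0} would come from a vertex adjacent to both
   white vertices u and v0. *)
have [v [w' [vB w'B _ Hv]]] :=
  zero_forcing_first_force (zero_forcing_setD2_centre uv0) BnT.
move: vB; rewrite !inE andbT => /andP [vv0 vu].
have evu : e v u.
  case: (eqVneq v w) => [-> | vw]; first by rewrite e_sym.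
  by rewrite e_sym (leaves_twins vv0 wv0 vw) // eq_sym.
have evv0 : e v v0 by rewrite e_sym centre_adj.
case: (eqVneq w' u) => [w'u | w'u].
  by have := Hv v0 evv0; rewrite w'u eq_sym uv0 !inE eqxx => /(_ isT).
by have := Hv u evu; rewrite eq_sym w'u !inE eqxx /= andbF => /(_ isT).
Qed.

Lemma star_adjE (x z : T) : e x z = (x == v0) (+) (z == v0).
Proof.
case: (eqVneq x v0) => [-> | xv0]; case: (eqVneq z v0) => [-> | zv0] /=.
- exact: e_irr.
- exact: centre_adj.
- by rewrite e_sym centre_adj.
- exact/negbTE/leaves_nonadj.
Qed.

End StarRecognition.

Lemma star_graph_iso (T : finType) (e : rel T) (r : nat) (v0 : T) :
  #|T| = r.+1 -> (forall x z, e x z = (x == v0) (+) (z == v0)) ->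
  graph_iso e (@star_adj r).
Proof.
move=> cardT eE.
have cardTo : #|T| = #|{: option 'I_r}| by rewrite card_option card_ord.
pose phi x := enum_val (cast_ord cardTo (enum_rank x)).
have phi_inj : injective phi.
  by move=> x y /enum_val_inj /cast_ord_inj /enum_rank_inj.
pose g x := tperm (phi v0) None (phi x).
have g_inj : injective g by move=> x y /perm_inj /phi_inj.
have gN x : (g x == None) = (x == v0).
  by rewrite (can2_eq (tpermK _ _) (tpermK _ _)) tpermR (inj_eq phi_inj).
exists g; split.
  by apply: (inj_card_bij g_inj); rewrite card_option card_ord cardT.
by move=> x z; rewrite eE -!gN; case: (g x) => [?|]; case: (g z) => [?|].
Qed.

Section StarK2.

Variable r : nat.
Implicit Types (b : bool) (i j : 'I_r) (z : option 'I_r * bool).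

Lemma starK2_centre_nbr b z :
  starK2_adj (None, b) z -> z = (None, ~~ b) \/ exists i, z = (Some i, b).
Proof.
case: z => [[i|] b']; rewrite /starK2_adj /= ?andbT ?andbF ?orbF.
  by move/eqP <-; right; exists i.
by case: b; case: b' => // _; left.
Qed.

Lemma starK2_common_nbr b i j z :
  i != j -> starK2_adj (Some i, b) z -> starK2_adj (Some j, b) z ->
  z = (None, b).
Proof.
case: z => [[k|] b']; rewrite /starK2_adj /= ?andbT ?andbF ?orbF.
  by move=> ij /andP [/eqP [<-] _] /andP [/eqP [jk] _]; rewrite jk eqxx in ij.
by move=> _ /eqP <-.
Qed.

Lemma card_starK2_nbr_leaf b i : #|[set z | starK2_adj (Some i, b) z]| <= 2.
Proof.
apply: (@leq_trans #|[set (None, b); (Some i, ~~ b)]|).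
  apply/subset_leq_card/subsetP => -[[k|] b'];
    rewrite !inE /starK2_adj /= ?andbT ?andbF ?orbF.
    by case/andP => /eqP [->]; case: b; case: b'.
  by move/eqP <-.
by rewrite cards2; case: (_ != _).
Qed.

Lemma card_starK2_nbr_centre b : #|[set z | @starK2_adj r (None, b) z]| = r.+1.
Proof.
pose nbr (o : option 'I_r) := if o is Some i then (Some i, b) else (None, ~~ b).
have nbr_inj : injective nbr by case=> [?|] [?|] // [->].
suff -> : [set z | @starK2_adj r (None, b) z] = nbr @: setT.
  by rewrite card_imset // cardsT card_option card_ord.
apply/setP => z; rewrite inE; apply/idP/imsetP.
  by case/starK2_centre_nbr => [-> | [i ->]]; [exists None | exists (Some i)].
case=> -[i|] _ ->; rewrite /starK2_adj /= ?eqxx //.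
by clear nbr_inj nbr; case: b.
Qed.

End StarK2.

Section TarIsoStarK2.

Variables (T : finType) (e : rel T) (r : nat).
Hypotheses (e_sym : symmetric e) (e_irr : irreflexive e).
Hypothesis e_nonisolated : forall v, exists u, e v u.
Variable f : option 'I_r * bool -> {set T}.
Hypotheses (f_inj : injective f) (f_zfs : forall x, zero_forcing_set e (f x)).
Hypothesis f_onto : forall S, zero_forcing_set e S -> exists x, f x = S.
Hypothesis f_adj : forall x y, tar_adj (f x) (f y) = starK2_adj x y.

Lemma f_preim_setD1 (v : T) : exists z, f z = [set: T] :\ v.
Proof. exact/f_onto/zero_forcing_setD1. Qed.

Lemma f_nbr_setT c :
  f c = [set: T] -> f @: [set z | starK2_adj c z] = [set [set: T] :\ v | v : T].
Proof.
move=> fc; apply/setP => S; apply/imsetP/imsetP => [[z] | [v _ ->]].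
  by rewrite inE -f_adj fc => /tar_adj_setT [v ->] ->; exists v.
have [z fz] := f_preim_setD1 v.
by exists z; rewrite // inE -f_adj fc fz tar_adj_setD1 // inE.
Qed.

Lemma card_nbr_setT c : f c = [set: T] -> #|[set z | starK2_adj c z]| = #|T|.
Proof.
move=> fc; rewrite -(card_imset _ f_inj) f_nbr_setT //.
by rewrite card_imset ?cardsT //; apply: setTD1_inj.
Qed.

Lemma setT_preim_centre : 3 <= #|T| -> exists b, f (None, b) = [set: T].
Proof.
move=> T_ge3.
have [[[i|] b] fc] := f_onto (zero_forcing_setT e); last by exists b.
by move: (card_starK2_nbr_leaf b i); rewrite card_nbr_setT // leqNgt T_ge3.
Qed.

Section Centre.

Variable b : bool.
Hypothesis fb : f (None, b) = [set: T].

Lemma card_vertices : #|T| = r.+1.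
Proof. by rewrite -(card_nbr_setT fb) card_starK2_nbr_centre. Qed.

Lemma exists_star_centre : exists v0, f (None, ~~ b) = [set: T] :\ v0.
Proof. by apply: tar_adj_setT; rewrite -fb f_adj /starK2_adj /=; case: b. Qed.

Variable v0 : T.
Hypothesis fv0 : f (None, ~~ b) = [set: T] :\ v0.

Lemma f_leaf_preim_setD1 u : u != v0 -> exists i, f (Some i, b) = [set: T] :\ u.
Proof.
move=> uv0; have [z fz] := f_preim_setD1 u.
have : starK2_adj (None, b) z by rewrite -f_adj fb fz tar_adj_setD1 // inE.
case/starK2_centre_nbr => [zE | [i zE]]; last by exists i; rewrite -zE.
by move: uv0; rewrite -(inj_eq (@setTD1_inj T)) /= -fv0 -fz zE eqxx.
Qed.

Lemma zero_forcing_setD2_centre u :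
  u != v0 -> zero_forcing_set e ([set: T] :\ u :\ v0).
Proof.
move=> uv0; have [i fi] := f_leaf_preim_setD1 uv0.
(* (Some i, ~~ b) closes the square (None, ~~ b), (None, b), (Some i, b). *)
rewrite -(@tar_adj_setD1_common _ _ _ (f (Some i, ~~ b))) //.
- by rewrite -fi f_adj /starK2_adj /= eqxx; case: b.
- by rewrite -fv0 f_adj /starK2_adj /= eqxx.
- by rewrite -fb (inj_eq f_inj).
Qed.

Lemma not_zero_forcing_setD2_leaves u w :
  u != v0 -> w != v0 -> u != w -> ~ zero_forcing_set e ([set: T] :\ u :\ w).
Proof.
move=> uv0 wv0 uw /f_onto [z fz].
have [i fi] := f_leaf_preim_setD1 uv0; have [j fj] := f_leaf_preim_setD1 wv0.
have ij : i != j.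
  move: uw; rewrite -(inj_eq (@setTD1_inj T)) /= -fi -fj.
  by apply: contraNneq => ->.
have D2C : [set: T] :\ u :\ w = [set: T] :\ w :\ u.
  by apply/setP => x; rewrite !inE !andbT andbC.
have zb : z = (None, b).
  apply: (starK2_common_nbr ij); rewrite -f_adj fz.
    by rewrite fi tar_adj_setD1 // !inE eq_sym uw.
  by rewrite fj D2C tar_adj_setD1 // !inE uw.
by move: fz; rewrite zb fb => /setP /(_ u); rewrite !inE eqxx andbF.
Qed.

End Centre.

Lemma tar_starK2_graph_iso : 3 <= #|T| -> graph_iso e (@star_adj r).
Proof.
move=> T_ge3; have [b fb] := setT_preim_centre T_ge3.
have [v0 fv0] := exists_star_centre fb.
apply: (star_graph_iso (card_vertices fb)).
exact: (star_adjE e_sym e_irr e_nonisolated (zero_forcing_setD2_centre fb fv0)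
                  (not_zero_forcing_setD2_leaves fb fv0)).
Qed.

End TarIsoStarK2.

Theorem proposition2p35 (T : finType) (e : rel T) (r : nat) :
  simple_graph e ->
  3 <= #|T| ->
  (forall v : T, exists u, e v u) ->
  0 < r ->
  iso_onto (zero_forcing_set e) (@tar_adj T) (@starK2_adj r) ->
  graph_iso e (@star_adj r).
Proof.
move=> [e_sym e_irr] T_ge3 e_nonisolated _ [f [f_inj f_zfs f_onto f_adj]].
exact: (tar_starK2_graph_iso e_sym e_irr e_nonisolated
                             f_inj f_zfs f_onto f_adj T_ge3).
Qed.
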